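(* For each integer $s\geq 2$, \[\lim_{t\to\infty}\sqrt[t]{A_{321}(K_{s,t}^\beta)}=2^s.\]
   Context: The comb $K_{s,t}$ has elements $e_{i,j}$, $1\le i\le s$, $1\le j\le t$, with partial order generated by the covers $e_{i,1}\lessdot e_{i+1,1}$ ($1\le i\le s-1$) and $e_{i,j}\lessdot e_{i,j+1}$ ($1\le j\le t-1$). $K^\beta_{s,t}$ is the labeled poset on $[st]$ obtained by giving $e_{i,j}$ the label $(i-1)t+j$. A linear extension is a permutation of $[st]$ in which $x$ precedes $y$ whenever $x<y$ in the poset; $A_{321}(P)$ is the number of linear extensions of $P$ avoiding the pattern $321$. *)

From mathcomp Require Import all_boot all_fingroup.
Set Implicit Arguments. Unset Strict Implicit. Unset Printing Implicit Defensive.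

(* Labels are 0-indexed: label a : 'I_(s*t) stands for the element
   e_{i+1,j+1} of the comb K_{s,t} with i = a %/ t, j = a %% t, i.e. the
   paper's label (i-1)t+j shifted down by one. *)

(* Cover relations of the comb: e_{i,1} <. e_{i+1,1} and e_{i,j} <. e_{i,j+1}. *)
Definition comb_cover (s t : nat) : rel 'I_(s * t) :=
  fun a b =>
    (((a %% t == 0) && (b %% t == 0)) && (b %/ t == (a %/ t).+1))
    || ((b %/ t == a %/ t) && (b %% t == (a %% t).+1)).

Definition comb_lt (s t : nat) (a b : 'I_(s * t)) : bool :=
  (a != b) && connect (@comb_cover s t) a b.

(* A permutation sigma is read as the word sigma 0, sigma 1, ..., sigma (n-1);
   the position of label x in that word is sigma^-1 x. *)
Definition is_linext (s t : nat) (sigma : {perm 'I_(s * t)}) : bool :=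
  [forall x, forall y, comb_lt x y ==> ((sigma^-1)%g x < (sigma^-1)%g y)].

Definition contains321 (n : nat) (sigma : {perm 'I_n}) : bool :=
  [exists p : 'I_n, exists q : 'I_n, exists r : 'I_n,
     [&& p < q, q < r, sigma q < sigma p & sigma r < sigma q]].

Definition A321_comb (s t : nat) : nat :=
  #|[set sigma : {perm 'I_(s * t)} | is_linext sigma && ~~ contains321 sigma]|.

(* A 321-avoiding permutation is the union of two increasing subsequences: its
   left-to-right maxima and the remaining entries.  In a linear extension of the comb the
   labels of each tooth appear in increasing order, so the extension is determined by the
   tooth of the label at each position; along either increasing subsequence this tooth
   index is weakly increasing, hence described by s cut points.  Therefore
   A_321(K_{s,t}) <= 2^{st} (st+1)^{2s}.
   Conversely, a word over the teeth 0..s-1 using each letter t times, in which every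
   letter j > 0 is preceded by some j-1 and which has no strictly decreasing subsequence
   of length 3, yields a 321-avoiding linear extension.  Cutting the positions into s
   segments of length t and filling segment k with the letters k-1 and k+1 in balanced
   proportions gives at least 2^{st} / (2t+2)^s such words.  Both polynomial factors
   disappear under the t-th root. *)

From Stdlib Require Import Reals Lra Lia.
From Coquelicot Require Import Coquelicot.
From mathcomp Require Import ssreflect.
From mathcomp Require all_boot all_fingroup zify.
Open Scope R_scope.

Module A321Comb.
Import all_boot all_fingroup zify.
Set Implicit Arguments. Unset Strict Implicit. Unset Printing Implicit Defensive.
Local Open Scope nat_scope.

Lemma divnMDl_small q r t : r < t -> (q * t + r) %/ t = q.
Proof. by move=> lt_rt; rewrite divnMDl ?divn_small ?addn0 //; lia. Qed.

Lemma modnMDl_small q r t : r < t -> (q * t + r) %% t = r.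
Proof. by move=> lt_rt; rewrite modnMDl modn_small. Qed.

Lemma card_set (T : finType) : #|{: {set T}}| = 2 ^ #|T|.
Proof. by rewrite -cardsT -card_powerset; apply: eq_card => A; rewrite powersetE subsetT. Qed.

Lemma linext_of_covers s t (sigma : {perm 'I_(s * t)}) :
  (forall p q, comb_cover (sigma p) (sigma q) -> p < q) -> is_linext sigma.
Proof.
move=> cover_lt; apply/forallP => x; apply/forallP => y.
apply/implyP => /andP[ne_xy conn_xy].
have le_cover u v : comb_cover u v -> (sigma^-1)%g u <= (sigma^-1)%g v.
  by move=> cover_uv; apply/ltnW/cover_lt; rewrite !permKV.
rewrite ltn_neqAle (inj_eq val_inj) (inj_eq perm_inj) ne_xy /=.
case/connectP: conn_xy => l path_l -> {ne_xy}.
elim: l x path_l => //= z l IH x /andP[cover_xz path_z].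
exact: leq_trans (le_cover _ _ cover_xz) (IH z path_z).
Qed.

Section CombOrder.
Variables s t : nat.
Hypothesis t_gt0 : 0 < t.
Local Notation n := (s * t).

Lemma tooth_lt (x : 'I_n) : x %/ t < s.
Proof. by rewrite ltn_divLR. Qed.

Definition tooth_of (x : 'I_n) : 'I_s := Ordinal (tooth_lt x).
Definition offset_of (x : 'I_n) : 'I_t := Ordinal (ltn_pmod x t_gt0).

Lemma comb_elt_lt (i : 'I_s) (j : 'I_t) : i * t + j < n.
Proof. by rewrite -ltn_divLR // divnMDl_small. Qed.

Definition comb_elt (i : 'I_s) (j : 'I_t) : 'I_n := Ordinal (comb_elt_lt i j).

Lemma tooth_of_elt i j : tooth_of (comb_elt i j) = i.
Proof. by apply: val_inj; rewrite /= divnMDl_small. Qed.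

Lemma offset_of_elt i j : offset_of (comb_elt i j) = j.
Proof. by apply: val_inj; rewrite /= modnMDl_small. Qed.

Lemma comb_eltK (x : 'I_n) : comb_elt (tooth_of x) (offset_of x) = x.
Proof. by apply: val_inj; rewrite /= -divn_eq. Qed.

Lemma sum_comb_coords (F : 'I_n -> nat) :
  \sum_(x : 'I_n) F x = \sum_(i < s) \sum_(j < t) F (comb_elt i j).
Proof.
rewrite pair_bigA /= (reindex (fun u : 'I_s * 'I_t => comb_elt u.1 u.2)) //.
exists (fun x => (tooth_of x, offset_of x)) => [[i j] _|x _].
  by rewrite tooth_of_elt offset_of_elt.
exact: comb_eltK.
Qed.

Lemma comb_connect_tooth (x y : 'I_n) :
  x %/ t = y %/ t -> x %% t <= y %% t -> connect (@comb_cover s t) x y.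
Proof.
move def_d : (y %% t - x %% t) => d; elim: d y def_d => [|d IH] y def_d same_tooth le_xy.
  have -> : x = y by apply: val_inj; rewrite /= (divn_eq x t) (divn_eq y t); lia.
  exact: connect0.
have y_gt0 : 0 < y %% t by lia.
have lt_y' : (y : nat).-1 < n by have := ltn_ord y; lia.
pose y' := Ordinal lt_y'.
have y'E : y' = (y %/ t) * t + (y %% t).-1 :> nat by rewrite /= {1}(divn_eq y t); lia.
have lt_off : (y %% t).-1 < t by have := ltn_pmod y t_gt0; lia.
have y'_tooth : y' %/ t = y %/ t by rewrite y'E divnMDl_small.
have y'_off : y' %% t = (y %% t).-1 by rewrite y'E modnMDl_small.
have conn_xy' : connect (@comb_cover s t) x y' by apply: IH; rewrite ?y'_tooth ?y'_off //; lia.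
have cover_y'y : comb_cover y' y by rewrite /comb_cover y'_tooth y'_off eqxx /=; lia.
exact: connect_trans conn_xy' (connect1 cover_y'y).
Qed.

Lemma linext_tooth_mono (sigma : {perm 'I_n}) (x y : 'I_n) : is_linext sigma ->
  x %/ t = y %/ t -> x %% t < y %% t -> (sigma^-1)%g x < (sigma^-1)%g y.
Proof.
move=> /forallP /(_ x) /forallP /(_ y) /implyP linext_xy same_tooth lt_xy.
apply: linext_xy.
rewrite /comb_lt comb_connect_tooth ?andbT //; last exact: ltnW.
by apply: contraTneq lt_xy => ->; rewrite ltnn.
Qed.

Lemma card_tooth_prefix (i off : nat) : i < s -> off <= t ->
  #|[set y : 'I_n | (y %/ t == i) && (y %% t < off)]| = off.
Proof.
move=> lt_is le_off.
have lt_pos (r : 'I_off) : i * t + r < n.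
  have lt_rt : r < t by exact: leq_trans (ltn_ord r) le_off.
  by rewrite -ltn_divLR // divnMDl_small.
pose pos (r : 'I_off) : 'I_n := Ordinal (lt_pos r).
have pos_inj : injective pos.
  by move=> r r' /(congr1 val) /= /addnI /val_inj.
rewrite -[RHS](card_ord off) -(card_imset _ pos_inj); apply: eq_card => y.
rewrite inE; apply/andP/imsetP => [[/eqP tooth_y off_y]|[r _ ->]].
  by exists (Ordinal off_y) => //; apply: val_inj; rewrite /= {1}(divn_eq y t) tooth_y addnC.
have lt_rt : r < t by exact: leq_trans (ltn_ord r) le_off.
by rewrite /= divnMDl_small // modnMDl_small // eqxx ltn_ord.
Qed.

Lemma linext_offset (sigma : {perm 'I_n}) (p : 'I_n) : is_linext sigma ->
  #|[set q : 'I_n | (q < p) && (sigma q %/ t == sigma p %/ t)]| = sigma p %% t.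
Proof.
move=> linext.
rewrite -(card_tooth_prefix (tooth_lt (sigma p)) (ltnW (ltn_pmod _ t_gt0))).
rewrite -[RHS](card_preimset _ (@perm_inj _ sigma)); apply: eq_card => q; rewrite !inE.
have [same|_] := eqVneq (sigma q %/ t) (sigma p %/ t); rewrite ?andbT ?andbF //=.
apply/idP/idP => [lt_qp|lt_off]; last first.
  by have := linext_tooth_mono linext same lt_off; rewrite !permK.
rewrite ltnNge; apply: contraTN lt_qp; rewrite leq_eqVlt -leqNgt => /predU1P[eq_off|lt_off].
  suff -> : q = p by [].
  apply: (@perm_inj _ sigma); apply: val_inj.
  by rewrite /= (divn_eq (sigma q) t) same -eq_off -divn_eq.
by have := linext_tooth_mono linext (esym same) lt_off; rewrite !permK => /ltnW.
Qed.

End CombOrder.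

Section Avoid321.
Variable n : nat.
Implicit Types (sigma : {perm 'I_n}) (C : {set 'I_n}).

Definition lr_max sigma : {set 'I_n} :=
  [set p : 'I_n | [forall q : 'I_n, (q < p) ==> (sigma q < sigma p)]].

Lemma lr_max_incr sigma : {in lr_max sigma &, {homo sigma : p q / p < q}}.
Proof. by move=> p q _; rewrite inE => /forallP /(_ p) /implyP. Qed.

Lemma avoid321_incr_notin_lr_max sigma : ~~ contains321 sigma ->
  {in ~: lr_max sigma &, {homo sigma : p q / p < q}}.
Proof.
move=> avoid p q; rewrite !inE => /forallPn [r]; rewrite negb_imply -leqNgt.
move=> /andP[lt_rp le_pr] _ lt_pq; rewrite ltnNge; apply: contra avoid => le_qp.
have ne_pr : sigma p != sigma r :> nat.
  by rewrite (inj_eq val_inj) (inj_eq perm_inj); apply: contraTneq lt_rp => ->; rewrite ltnn.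
have ne_qp : sigma q != sigma p :> nat.
  by rewrite (inj_eq val_inj) (inj_eq perm_inj); apply: contraTneq lt_pq => ->; rewrite ltnn.
apply/existsP; exists r; apply/existsP; exists p; apply/existsP; exists q.
by rewrite lt_rp lt_pq !ltn_neqAle ne_pr ne_qp le_pr le_qp.
Qed.

Lemma leq_count_lt C (f : 'I_n -> nat) (p : 'I_n) (j : nat) :
  {in C &, {homo f : q1 q2 / q1 < q2 >-> q1 <= q2}} -> p \in C ->
  (j <= f p) = (#|[set q in C | f q < j]| <= #|[set q in C | q < p]|).
Proof.
move=> f_mono pC; have [le_jf|lt_fj] := leqP j (f p); apply/esym.
  apply: subset_leq_card; apply/subsetP => q; rewrite !inE => /andP[qC lt_fq].
  rewrite qC /=; case: (ltngtP q p) => // [lt_pq|/val_inj eq_qp].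
    by have := f_mono p q pC qC lt_pq; lia.
  by move: lt_fq; rewrite eq_qp; lia.
apply/negbTE; rewrite -ltnNge; apply: proper_card; apply/properP; split.
  apply/subsetP => q; rewrite !inE => /andP[qC lt_qp]; rewrite qC /=.
  by have := f_mono q p qC pC lt_qp; lia.
by exists p; rewrite !inE pC ?lt_fj ?ltnn.
Qed.

End Avoid321.

Section Encoding.
Variables s t : nat.
Hypothesis t_gt0 : 0 < t.
Local Notation n := (s * t).
Implicit Types (sigma : {perm 'I_n}) (C : {set 'I_n}).

Definition tooth_counts sigma C : {ffun 'I_s -> 'I_n.+1} :=
  [ffun j : 'I_s => inord #|[set q in C | sigma q %/ t < j]|].

Definition linext_code sigma :=
  (lr_max sigma, tooth_counts sigma (lr_max sigma), tooth_counts sigma (~: lr_max sigma)).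

Lemma tooth_countsE sigma C (j : 'I_s) :
  tooth_counts sigma C j = #|[set q in C | sigma q %/ t < j]| :> nat.
Proof. by rewrite ffunE inordK // ltnS -[X in _ <= X](card_ord n) max_card. Qed.

Lemma tooth_eq_of_counts (s1 s2 : {perm 'I_n}) C (p : 'I_n) :
  {in C &, {homo s1 : q1 q2 / q1 < q2}} -> {in C &, {homo s2 : q1 q2 / q1 < q2}} ->
  p \in C -> tooth_counts s1 C = tooth_counts s2 C -> s1 p %/ t = s2 p %/ t.
Proof.
move=> incr1 incr2 pC eq_counts.
have tooth_mono sigma : {in C &, {homo sigma : q1 q2 / q1 < q2}} ->
    {in C &, {homo (fun q => sigma q %/ t) : q1 q2 / q1 < q2 >-> q1 <= q2}}.
  by move=> incr q1 q2 q1C q2C lt_q; apply/leq_div2r/ltnW/incr.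
have leq_tooth (j : 'I_s) : (j <= s1 p %/ t) = (j <= s2 p %/ t).
  rewrite (leq_count_lt j (tooth_mono _ incr1) pC) (leq_count_lt j (tooth_mono _ incr2) pC).
  by rewrite -!tooth_countsE eq_counts.
have := leq_tooth (Ordinal (tooth_lt t_gt0 (s1 p))); rewrite /= leqnn => /esym le12.
have := leq_tooth (Ordinal (tooth_lt t_gt0 (s2 p))); rewrite /= leqnn => le21.
by apply/eqP; rewrite eqn_leq le12 le21.
Qed.

Lemma linext_code_inj :
  {in [set sigma | is_linext sigma && ~~ contains321 sigma] &, injective linext_code}.
Proof.
move=> s1 s2; rewrite !inE => /andP[lin1 avoid1] /andP[lin2 avoid2] [eq_lr eq_in eq_out].
have same_tooth p : s1 p %/ t = s2 p %/ t.
  have [p_lr|p_lr] := boolP (p \in lr_max s1).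
    apply: tooth_eq_of_counts p_lr _; first exact: lr_max_incr.
      by rewrite eq_lr; exact: lr_max_incr.
    by rewrite eq_in eq_lr.
  have p_nlr : p \in ~: lr_max s1 by rewrite inE.
  apply: tooth_eq_of_counts p_nlr _; first exact: avoid321_incr_notin_lr_max.
    by rewrite eq_lr; exact: avoid321_incr_notin_lr_max.
  by rewrite eq_out eq_lr.
apply/permP => p; apply: val_inj.
rewrite /= (divn_eq (s1 p) t) (divn_eq (s2 p) t) -(linext_offset t_gt0 p lin1).
rewrite -(linext_offset t_gt0 p lin2) same_tooth; congr (_ + _).
by apply: eq_card => q; rewrite !inE !same_tooth.
Qed.

Lemma A321_comb_ub : A321_comb s t <= 2 ^ n * n.+1 ^ (2 * s).
Proof.
rewrite /A321_comb -(card_in_imset linext_code_inj); apply: leq_trans (max_card _) _.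
by rewrite !card_prod card_set !card_ffun !card_ord -mulnA -expnD addnn -mul2n.
Qed.

End Encoding.

Section BlockWord.
Variables s t : nat.
Local Notation n := (s * t).
Variable w : 'I_n -> nat.
Implicit Types p q r : 'I_n.

Definition word_rank (p : 'I_n) := #|[set q : 'I_n | (q < p) && (w q == w p)]|.

Definition word_label (p : 'I_n) : 'I_n := insubd p (w p * t + word_rank p).

(* The identity is a placeholder for words violating the hypotheses below. *)
Definition word_perm : {perm 'I_n} :=
  if injectiveP word_label is ReflectT label_inj then perm label_inj else 1%g.

Hypothesis w_lt : forall p, w p < s.
Hypothesis w_count : forall j, j < s -> #|[set p | w p == j]| = t.
Hypothesis w_pred : forall p, 0 < w p -> exists2 q : 'I_n, q < p & w q = (w p).-1.
Hypothesis w_avoid : forall p q r : 'I_n, p < q -> q < r -> w q < w p -> w q <= w r.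

Lemma word_rank_lt p : word_rank p < t.
Proof.
rewrite -(w_count (w_lt p)); apply: proper_card; apply/properP; split.
  by apply/subsetP => q; rewrite !inE => /andP[].
by exists p; rewrite !inE ?eqxx // ltnn.
Qed.

Lemma word_rank_mono p q : p < q -> w p = w q -> word_rank p < word_rank q.
Proof.
move=> lt_pq eq_w; apply: proper_card; apply/properP; split.
  apply/subsetP => r; rewrite !inE => /andP[lt_rp /eqP ->]; rewrite eq_w eqxx andbT.
  exact: ltn_trans lt_rp lt_pq.
by exists p; rewrite !inE ?eq_w ?eqxx ?lt_pq // ltnn.
Qed.

Lemma ltn_word_rank p q : w p = w q -> (word_rank p < word_rank q) = (p < q).
Proof.
move=> eq_w; apply/idP/idP => [lt_rank|]; last by move/word_rank_mono; apply.
case: (ltngtP p q) => // [lt_qp|/val_inj eq_pq]; last by rewrite eq_pq ltnn in lt_rank.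
by have := word_rank_mono lt_qp (esym eq_w); rewrite ltnNge ltnW.
Qed.

Lemma word_labelE p : word_label p = w p * t + word_rank p :> nat.
Proof.
have t_gt0 : 0 < t by apply: leq_ltn_trans (word_rank_lt p).
by rewrite val_insubd -ltn_divLR // divnMDl_small ?word_rank_lt ?w_lt.
Qed.

Lemma word_label_inj : injective word_label.
Proof.
move=> p q eq_label.
have t_gt0 : 0 < t by apply: leq_ltn_trans (word_rank_lt p).
have := congr1 (divn^~ t) (congr1 val eq_label); have := congr1 (modn^~ t) (congr1 val eq_label).
rewrite /= !word_labelE !divnMDl_small ?modnMDl_small ?word_rank_lt // => eq_rank eq_w.
case: (ltngtP p q) => [|lt_qp|/val_inj //].
  by rewrite -(ltn_word_rank eq_w) eq_rank ltnn.
by move: lt_qp; rewrite -(ltn_word_rank (esym eq_w)) eq_rank ltnn.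
Qed.

Lemma word_permE p : word_perm p = word_label p.
Proof.
rewrite /word_perm; case: injectiveP => [label_inj|[]]; last exact: word_label_inj.
by rewrite permE.
Qed.

Lemma word_perm_tooth p : word_perm p %/ t = w p.
Proof.
have t_gt0 : 0 < t by apply: leq_ltn_trans (word_rank_lt p).
by rewrite word_permE word_labelE divnMDl_small ?word_rank_lt.
Qed.

Lemma word_perm_offset p : word_perm p %% t = word_rank p.
Proof. by rewrite word_permE word_labelE modnMDl_small ?word_rank_lt. Qed.

Lemma word_perm_lt_letter p q : p < q -> word_perm q < word_perm p -> w q < w p.
Proof.
move=> lt_pq lt_perm.
have le_w : w q <= w p by rewrite -!word_perm_tooth; apply/leq_div2r/ltnW.
rewrite ltn_neqAle le_w andbT; apply: contraTneq lt_perm => eq_w.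
by rewrite -leqNgt !word_permE !word_labelE eq_w leq_add2l ltnW // word_rank_mono.
Qed.

Lemma word_perm_avoid321 : ~~ contains321 word_perm.
Proof.
apply/negP => /existsP[p /existsP[q /existsP[r /and4P[lt_pq lt_qr lt_qp lt_rq]]]].
have := w_avoid lt_pq lt_qr (word_perm_lt_letter lt_pq lt_qp).
by rewrite leqNgt (word_perm_lt_letter lt_qr lt_rq).
Qed.

Lemma word_perm_cover p q : comb_cover (word_perm p) (word_perm q) -> p < q.
Proof.
rewrite /comb_cover !word_perm_tooth !word_perm_offset.
case/orP => [/andP[/andP[/eqP rank_p _] /eqP w_q]|/andP[/eqP eq_w /eqP rank_q]].
  have w_q_gt0 : 0 < w q by rewrite w_q.
  have [r lt_rq w_r] := @w_pred q w_q_gt0.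
  rewrite w_q /= in w_r.
  have : r \notin [set q : 'I_n | (q < p) && (w q == w p)] by rewrite (cards0_eq rank_p) inE.
  by rewrite inE w_r eqxx andbT -leqNgt => le_pr; apply: leq_ltn_trans le_pr lt_rq.
by rewrite -(ltn_word_rank (esym eq_w)) rank_q.
Qed.

Lemma word_perm_linext : is_linext word_perm.
Proof. exact: linext_of_covers word_perm_cover. Qed.

End BlockWord.

Lemma sum_eq_ord N (a c : nat) : \sum_(k < N) (k == a :> nat) * c = (a < N) * c.
Proof.
case: (ltnP a N) => [lt_aN|le_Na].
  rewrite (bigD1 (Ordinal lt_aN)) // eqxx mul1n big1 /= ?addn0 // => k.
  by rewrite -(inj_eq val_inj) => /negbTE ->.
by rewrite big1 // => k _; rewrite ltn_eqF // (leq_trans (ltn_ord k) le_Na).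
Qed.

Lemma sum_if_mem (T : finType) (A : {set T}) (a b : nat) :
  \sum_(x : T) (if x \in A then a else b) = #|A| * a + (#|T| - #|A|) * b.
Proof.
rewrite (bigID (mem A)) /= -(cardC (mem A)) addKn -!sum_nat_const.
by congr (_ + _); apply: eq_bigr => x /=; [move=> -> | move/negbTE ->].
Qed.

Lemma leq_bin_half N k : 'C(N, k) <= 'C(N, N./2).
Proof.
have bin_up i : i < N./2 -> 'C(N, i) <= 'C(N, i.+1).
  move=> lt_i; rewrite -(leq_pmul2l (ltn0Sn i)) mul_bin_left.
  by apply: leq_mul => //; lia.
have bin_le_half i : i <= N./2 -> 'C(N, i) <= 'C(N, N./2).
  move Hd : (N./2 - i) => d; elim: d i Hd => [|d IH] i Hd le_i.
    by have -> : i = N./2 by lia.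
  by apply: leq_trans (bin_up _ _) (IH _ _ _); lia.
have [le_k|lt_k] := leqP k N./2; first exact: bin_le_half.
have [le_kN|lt_Nk] := leqP k N; last by rewrite bin_small.
by rewrite -bin_sub //; apply: bin_le_half; lia.
Qed.

Lemma exp2_leq_bin_half N : 2 ^ N <= N.+1 * 'C(N, N./2).
Proof.
rewrite -(addn1 1) expnDn -[N.+1 in X in _ <= X](card_ord N.+1) -sum_nat_const.
by apply: leq_sum => i _; rewrite !exp1n !muln1 leq_bin_half.
Qed.

Lemma exp2_leq_bin_uphalf N : 2 ^ N <= N.+1 * 'C(N, N - N./2).
Proof. by rewrite bin_sub ?exp2_leq_bin_half //; lia. Qed.

Section Segments.
Variables m t : nat.
Hypothesis t_gt1 : 1 < t.
Local Notation s := m.+2.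
Local Notation n := (s * t).
Let t_gt0 : 0 < t := ltnW t_gt1.

Definition seg_hi k := minn k.+1 m.+1.
Definition seg_lo k := k.-1.
(* Letter j fills seg_size j.-1 places of segment j-1 and the other places of segment
   j+1; the alternation makes these counts add up to t. *)
Definition seg_size k := if odd k then t - t./2 else t./2.

(* The first position is kept for the letter 0, which every letter 1 must follow. *)
Definition seg_room (k : 'I_s) : {set 'I_t} :=
  if k == 0 :> nat then [set~ Ordinal t_gt0] else setT.

Definition seg_choice (k : 'I_s) : pred {set 'I_t} :=
  [pred X : {set 'I_t} | X \subset seg_room k & #|X| == seg_size k].

Local Notation choice := {dffun forall k : 'I_s, {set 'I_t}}.

Definition seg_word (X : choice) (p : 'I_n) : nat :=
  let k := tooth_of t_gt0 p in if offset_of t_gt0 p \in X k then seg_hi k else seg_lo k.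

Lemma seg_wordE X k r :
  seg_word X (comb_elt t_gt0 k r) = if r \in X k then seg_hi k else seg_lo k.
Proof. by rewrite /seg_word tooth_of_elt offset_of_elt. Qed.

Lemma seg_word_lt X p : seg_word X p < s.
Proof.
by rewrite /seg_word /seg_hi /seg_lo; have := ltn_ord (tooth_of t_gt0 p); case: ifP; lia.
Qed.

Lemma seg_word_avoid X (p q r : 'I_n) :
  p < q -> q < r -> seg_word X q < seg_word X p -> seg_word X q <= seg_word X r.
Proof.
move=> /ltnW /(leq_div2r t) le_pq /ltnW /(leq_div2r t) le_qr.
by rewrite /seg_word /seg_hi /seg_lo /=; do 3 case: ifP => _; lia.
Qed.

Lemma seg_size_S k : seg_size k + seg_size k.+1 = t.
Proof. by rewrite /seg_size /=; case: odd => /=; lia. Qed.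

Lemma seg_size_SS k : seg_size k.+2 = seg_size k.
Proof. by rewrite /seg_size /= negbK. Qed.

Lemma seg_size_gt0 k : 0 < seg_size k.
Proof. by rewrite /seg_size; case: odd; lia. Qed.

Lemma seg_word_pred X : X \in family seg_choice ->
  forall p, 0 < seg_word X p -> exists2 q : 'I_n, q < p & seg_word X q = (seg_word X p).-1.
Proof.
move=> /familyP X_choice p w_gt0.
have w_le : seg_word X p <= (tooth_of t_gt0 p).+1.
  by rewrite /seg_word /seg_hi /seg_lo; case: ifP; lia.
have w_lt := seg_word_lt X p.
have [w_gt1|w_le1] := ltnP 1 (seg_word X p).
  have lt_k : (seg_word X p).-2 < s by lia.
  pose k := Ordinal lt_k.
  have k_val : k = (seg_word X p).-2 :> nat by [].
  have := X_choice k; rewrite inE => /andP[_ /eqP card_Xk].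
  have /set0Pn [r r_in] : X k != set0 by rewrite -card_gt0 card_Xk seg_size_gt0.
  exists (comb_elt t_gt0 k r); last by rewrite seg_wordE r_in /seg_hi /=; lia.
  rewrite ltnNge; apply/negP => /(leq_div2r t).
  by rewrite divnMDl_small // -[p %/ t]/(tooth_of t_gt0 p : nat) k_val; lia.
have first_letter : seg_word X (comb_elt t_gt0 ord0 (Ordinal t_gt0)) = 0.
  have := X_choice ord0; rewrite inE /seg_room /= => /andP[/subsetP sub_room _].
  by rewrite seg_wordE ifF //; apply/negbTE/negP => /sub_room; rewrite !inE eqxx.
exists (comb_elt t_gt0 ord0 (Ordinal t_gt0)); last by rewrite first_letter; lia.
rewrite /= lt0n; apply: contraTneq w_gt0 => p0.
have -> : p = comb_elt t_gt0 ord0 (Ordinal t_gt0) by apply: val_inj; rewrite /= p0.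
by rewrite first_letter.
Qed.

Lemma sum_seg_hi j : j < s ->
  \sum_(k < s) seg_size k * (seg_hi k == j) =
    (0 < j) * seg_size j.-1 + (j == m.+1) * seg_size m.+1.
Proof.
move=> lt_js; rewrite (eq_bigr (fun k : 'I_s => (k == j.-1 :> nat) * ((0 < j) * seg_size j.-1)
    + (k == m.+1 :> nat) * ((j == m.+1) * seg_size m.+1))).
  by rewrite big_split /= !sum_eq_ord ltnSn (leq_ltn_trans (leq_pred j) lt_js) !mul1n.
move=> k _; move: (k : nat) (ltn_ord k) => {}k lt_ks; rewrite /seg_hi.
have [->|ne_k1] := eqVneq k j.-1; first lia.
have [->|ne_k2] := eqVneq k m.+1; lia.
Qed.

Lemma sum_seg_lo j : j < s ->
  \sum_(k < s) (t - seg_size k) * (seg_lo k == j) =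
    (j.+1 < s) * (t - seg_size j.+1) + (j == 0) * (t - seg_size 0).
Proof.
move=> lt_js; rewrite (eq_bigr (fun k : 'I_s => (k == j.+1 :> nat) * (t - seg_size j.+1)
    + (k == 0 :> nat) * ((j == 0) * (t - seg_size 0)))).
  by rewrite big_split /= !sum_eq_ord mul1n.
move=> k _; move: (k : nat) => {}k; rewrite /seg_lo.
have [->|ne_k1] := eqVneq k j.+1; first lia.
have [->|ne_k2] := eqVneq k 0; lia.
Qed.

Lemma sum_seg_counts j : j < s ->
  \sum_(k < s) (seg_size k * (seg_hi k == j) + (t - seg_size k) * (seg_lo k == j)) = t.
Proof.
move=> lt_js; rewrite big_split /= sum_seg_hi // sum_seg_lo //.
case: j lt_js => [|j] lt_js; first by have := seg_size_S 0; lia.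
rewrite [j.+1.-1]/=; have := seg_size_S j; have := seg_size_SS j.
by case: (eqVneq j m) => [->|ne_jm]; lia.
Qed.

Lemma seg_word_count X : X \in family seg_choice ->
  forall j, j < s -> #|[set p | seg_word X p == j]| = t.
Proof.
move=> /familyP X_choice j lt_js.
rewrite -sum1_card big_mkcond /= (eq_bigr (fun p => (seg_word X p == j : nat))); last first.
  by move=> p _; rewrite inE; case: eqP.
rewrite (sum_comb_coords t_gt0) -[RHS](sum_seg_counts lt_js); apply: eq_bigr => k _.
have := X_choice k; rewrite inE => /andP[_ /eqP <-].
have -> : t - #|X k| = #|'I_t| - #|X k| by rewrite card_ord.
rewrite -sum_if_mem; apply: eq_bigr => r _.
by rewrite seg_wordE; case: ifP.
Qed.

Definition seg_perm (X : choice) : {perm 'I_n} := word_perm (seg_word X).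

Lemma seg_perm_good X : X \in family seg_choice ->
  is_linext (seg_perm X) && ~~ contains321 (seg_perm X).
Proof.
move=> X_choice; apply/andP; split.
  exact: word_perm_linext (@seg_word_lt X) (seg_word_count X_choice) (seg_word_pred X_choice).
exact: word_perm_avoid321 (@seg_word_lt X) (seg_word_count X_choice) (@seg_word_avoid X).
Qed.

Lemma seg_perm_inj : {in family seg_choice &, injective seg_perm}.
Proof.
move=> X1 X2 X1_choice X2_choice eq_perm.
have eq_word p : seg_word X1 p = seg_word X2 p.
  rewrite -(word_perm_tooth (@seg_word_lt X1) (seg_word_count X1_choice)).
  rewrite -(word_perm_tooth (@seg_word_lt X2) (seg_word_count X2_choice)).
  by rewrite -/(seg_perm X1) eq_perm.
apply/ffunP => k; apply/setP => r; have := eq_word (comb_elt t_gt0 k r).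
have hi_ne_lo : seg_hi k != seg_lo k.
  by apply/eqP; rewrite /seg_hi /seg_lo; have := ltn_ord k; lia.
rewrite !seg_wordE; case: (r \in X1 k); case: (r \in X2 k) => // eq_hl;
  by rewrite eq_hl eqxx in hi_ne_lo.
Qed.

Lemma card_seg_choice k : #|seg_choice k| = 'C(t - (k == 0 :> nat), seg_size k).
Proof.
have card_room : #|seg_room k| = t - (k == 0 :> nat).
  by rewrite /seg_room; case: eqP => _; rewrite ?cardsC1 ?cardsT card_ord ?subn1 ?subn0.
by rewrite -card_room -cards_draws; apply: eq_card => X; rewrite !inE.
Qed.

Lemma exp2_leq_seg_choice k : 2 ^ t <= 2 * t.+1 * #|seg_choice k|.
Proof.
rewrite card_seg_choice /seg_size; case: eqP => [k0|_].
  rewrite k0 /= subn1 -(prednK t_gt0) expnS -mulnA leq_mul2l /=.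
  have -> : uphalf t.-1 = t.-1 - t.-1./2 by rewrite uphalf_half; lia.
  apply: leq_trans (exp2_leq_bin_uphalf _) _.
  by rewrite leq_mul2r leqnSn orbT.
rewrite /= subn0 -mulnA; apply: leq_trans (leq_pmull _ _) => //.
by case: odd; [exact: exp2_leq_bin_uphalf | exact: exp2_leq_bin_half].
Qed.

Lemma card_seg_family_le : #|(family seg_choice : simpl_pred choice)| <= A321_comb s t.
Proof.
rewrite -(card_in_imset seg_perm_inj) /A321_comb; apply: subset_leq_card.
by apply/subsetP => _ /imsetP [X X_choice ->]; rewrite inE seg_perm_good.
Qed.

Lemma A321_comb_lb : 2 ^ n <= (2 * t.+1) ^ s * A321_comb s t.
Proof.
apply: leq_trans (leq_mul (leqnn _) card_seg_family_le).
have -> : #|(family seg_choice : simpl_pred choice)| = \prod_(k < s) #|seg_choice k|.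
  by rewrite card_family foldrE big_map big_enum.
have -> : 2 ^ n = \prod_(k < s) 2 ^ t by rewrite prod_nat_const card_ord -expnM mulnC.
have -> : (2 * t.+1) ^ s = \prod_(k < s) (2 * t.+1) by rewrite prod_nat_const card_ord.
rewrite -big_split /=.
by apply: leq_prod => k _; exact: exp2_leq_seg_choice.
Qed.

End Segments.

Section RealBounds.
Local Open Scope R_scope.

Lemma INR_muln a b : INR (a * b) = INR a * INR b.
Proof. by rewrite -multE mult_INR. Qed.

Lemma INR_expn a b : INR (a ^ b) = INR a ^ b.
Proof. by elim: b => [|b IH] //; rewrite expnS INR_muln IH. Qed.

Lemma INR_leq a b : (a <= b)%N -> INR a <= INR b.
Proof. by move/leP; exact: le_INR. Qed.

Lemma INR_comb_poly s t a :
  INR (((2 * s.+1) * t) ^ (2 * s) * a) = (INR (2 * s.+1) * INR t) ^ (2 * s) * INR a.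
Proof. by rewrite INR_muln INR_expn [INR (_ * t)]INR_muln. Qed.

Lemma A321_comb_le_poly s t : (1 <= t)%coq_nat ->
  INR (A321_comb s t) <= (INR (2 * s.+1) * INR t) ^ (2 * s) * (2 ^ s) ^ t.
Proof.
move=> /leP t_gt0; rewrite -[2]/(INR 2) -!INR_expn -INR_comb_poly; apply: INR_leq.
rewrite -expnM mulnC; apply: leq_trans (A321_comb_ub s t_gt0) _; apply: leq_mul => //.
have [->|s_gt0] := posnP s; first by [].
by rewrite leq_exp2r ?muln_gt0 //; nia.
Qed.

Lemma A321_comb_ge_poly s t : (2 <= s)%coq_nat -> (2 <= t)%coq_nat ->
  (2 ^ s) ^ t <= (INR (2 * s.+1) * INR t) ^ (2 * s) * INR (A321_comb s t).
Proof.
move=> /leP s_gt1 /leP t_gt1; rewrite -[2]/(INR 2) -!INR_expn -INR_comb_poly; apply: INR_leq.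
case: s s_gt1 => [|[|m]] // _; rewrite -expnM; apply: leq_trans (A321_comb_lb m t_gt1) _.
apply: leq_mul => //; apply: (@leq_trans (((2 * m.+3) * t) ^ m.+2)).
  by rewrite leq_exp2r //; nia.
by apply: leq_pexp2l; lia.
Qed.

End RealBounds.

End A321Comb.

Lemma is_lim_seq_ln_div_INR : is_lim_seq (fun t => ln (INR t) / INR t) 0.
Proof. exact: (filterlim_comp _ _ _ INR _ _ _ _ is_lim_seq_INR is_lim_div_ln_p). Qed.

Lemma is_lim_seq_ln_poly_div (K : R) (k : nat) : 0 < K ->
  is_lim_seq (fun t => ln ((K * INR t) ^ k) / INR t) 0.
Proof.
move=> K_gt0.
have lim := is_lim_seq_scal_l _ (INR k) _ (is_lim_seq_plus' _ _ _ _
  (is_lim_seq_scal_l _ (ln K) _ (is_lim_seq_inv _ _ is_lim_seq_INR ltac:(discriminate)))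
  is_lim_seq_ln_div_INR).
rewrite /= Rmult_0_r Rplus_0_r Rmult_0_r in lim.
apply: is_lim_seq_ext_loc lim; exists 1%nat => t t_ge1.
have t_gt0 : 0 < INR t by apply: lt_0_INR; lia.
rewrite ln_pow ?ln_mult //; last exact: Rmult_lt_0_compat.
by field; lra.
Qed.

Lemma Un_cv_root_of_poly_squeeze (a : nat -> R) (c K : R) (k N : nat) :
  0 < c -> 0 < K ->
  (forall t, (N <= t)%nat -> a t <= (K * INR t) ^ k * c ^ t) ->
  (forall t, (N <= t)%nat -> c ^ t <= (K * INR t) ^ k * a t) ->
  Un_cv (fun t => Rpower (a t) (/ INR t)) c.
Proof.
move=> c_gt0 K_gt0 a_le a_ge.
pose e t := ln ((K * INR t) ^ k) / INR t.
have e_lim : is_lim_seq e 0 by exact: is_lim_seq_ln_poly_div.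
have ln_root_lim : is_lim_seq (fun t => / INR t * ln (a t)) (ln c).
  apply: (is_lim_seq_le_le_loc (fun t => ln c - e t) _ (fun t => ln c + e t)).
  - exists (Nat.max N 1) => t t_ge.
    have t_gt0 : 0 < INR t by apply: lt_0_INR; lia.
    have P_gt0 : 0 < (K * INR t) ^ k by apply/pow_lt/Rmult_lt_0_compat.
    have ct_gt0 : 0 < c ^ t by exact: pow_lt.
    have a_gt0 : 0 < a t.
      apply: (Rmult_lt_reg_l _ _ _ P_gt0); rewrite Rmult_0_r.
      have := a_ge t ltac:(lia); lra.
    have up := ln_le _ _ a_gt0 (a_le t ltac:(lia)).
    have lo := ln_le _ _ ct_gt0 (a_ge t ltac:(lia)).
    rewrite ln_mult // (ln_pow c _ c_gt0) in up; rewrite ln_mult // (ln_pow c _ c_gt0) in lo.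
    rewrite /e; split; apply: (Rmult_le_reg_l (INR t)) => //; field_simplify; lra.
  - by have := is_lim_seq_minus' _ _ _ _ (is_lim_seq_const (ln c)) e_lim; rewrite Rminus_0_r.
  - by have := is_lim_seq_plus' _ _ _ _ (is_lim_seq_const (ln c)) e_lim; rewrite Rplus_0_r.
apply/is_lim_seq_Reals; rewrite -[c](exp_ln c) //.
apply: is_lim_seq_continuous ln_root_lim.
exact: derivable_continuous_pt (derivable_pt_exp _).
Qed.

Theorem theorem6 (s : nat) (hs : (2 <= s)%nat) :
  Un_cv (fun t : nat => Rpower (INR (A321_comb s t)) (/ INR t)) (2 ^ s).
Proof.
apply: (Un_cv_root_of_poly_squeeze _ _ (INR (2 * S s)) (2 * s) 2).
- by apply: pow_lt; lra.
- by apply: lt_0_INR; lia.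
- by move=> t t_ge2; apply: A321Comb.A321_comb_le_poly; lia.
- by move=> t t_ge2; apply: A321Comb.A321_comb_ge_poly.
Qed.
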